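(* Let $A\in\{0,1\}^{m\times m}$, $B\in\{0,1\}^{n\times n}$ be non-degenerate, $\varphi:X_A\to X_B$ an elementary conjugacy and $R_\varphi$ as defined below. For $a\in\{1,\dots,m\}$, $b\in\{1,\dots,n\}$ the following are equivalent: (i) $(R_\varphi)_{a,b}=1$; (ii) there is $a'$ with $\varphi_{\mathrm{loc}}(a,a')=b$; (iii) there is $b'$ with $\varphi^{-1}_{\mathrm{loc}}(b',b)=a$; (iv) there are $x\in X_A$, $y\in X_B$ with $x_0=a$, $y_0=b$ and $y=\varphi(x)$.
   Context: Non-degenerate: no zero rows or columns. $X_A=\{x\in\{1,\dots,m\}^{\mathbb Z}:A_{x_\ell,x_{\ell+1}}=1\ \forall\ell\}$ with the left shift; a conjugacy is a shift-commuting homeomorphism. $\varphi:X_A\to X_B$ is elementary if there are $\varphi_{\mathrm{loc}}$ (on pairs $(a,a')$ with $A_{a,a'}=1$) and $\varphi^{-1}_{\mathrm{loc}}$ (on pairs $(b,b')$ with $B_{b,b'}=1$) with $\varphi(x)_i=\varphi_{\mathrm{loc}}(x_i,x_{i+1})$ and $\varphi^{-1}(y)_i=\varphi^{-1}_{\mathrm{loc}}(y_{i-1},y_i)$ for all $x,y,i$. $R_\varphi\in\{0,1\}^{m\times n}$ is defined by $(R_\varphi)_{a,b}=1$ iff there is $a'$ with $A_{a,a'}=1$ and $\varphi_{\mathrm{loc}}(a,a')=b$. Existential quantifiers over pairs range over allowed pairs. *)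

From mathcomp Require Import all_boot all_order all_algebra.
Set Implicit Arguments. Unset Strict Implicit. Unset Printing Implicit Defensive.
Import Order.TTheory GRing.Theory Num.Theory.
Local Open Scope ring_scope.

(* 0/1 matrices are represented as boolean matrices: A_{a,a'} = 1 iff A a a'.
   Symbols {1..m} are represented by 'I_m; bi-infinite sequences by int -> 'I_m. *)

Definition nondegenerate01 (m : nat) (A : 'M[bool]_m) : Prop :=
  (forall i : 'I_m, exists j : 'I_m, A i j) /\ (forall j : 'I_m, exists i : 'I_m, A i j).

Definition inSFT (m : nat) (A : 'M[bool]_m) (x : int -> 'I_m) : Prop :=
  forall l : int, A (x l) (x (l + 1)).

Definition shift (k : nat) (x : int -> 'I_k) : int -> 'I_k := fun i => x (i + 1).

Definition agree (k : nat) (N : nat) (x x' : int -> 'I_k) : Prop :=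
  forall i : int, (`|i| <= N)%N -> x i = x' i.

(* continuity (product topology of discrete spaces) of f restricted to the set X *)
Definition continuous_on (k l : nat) (X : (int -> 'I_k) -> Prop)
  (f : (int -> 'I_k) -> (int -> 'I_l)) : Prop :=
  forall x, X x -> forall N : nat, exists M : nat,
    forall x', X x' -> agree M x x' -> agree N (f x) (f x').

Definition is_conjugacy (m n : nat) (A : 'M[bool]_m) (B : 'M[bool]_n)
  (phi : (int -> 'I_m) -> (int -> 'I_n)) (psi : (int -> 'I_n) -> (int -> 'I_m)) : Prop :=
  (forall x, inSFT A x -> inSFT B (phi x)) /\
  (forall y, inSFT B y -> inSFT A (psi y)) /\
  (forall x, inSFT A x -> forall i, psi (phi x) i = x i) /\
  (forall y, inSFT B y -> forall i, phi (psi y) i = y i) /\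
  continuous_on (inSFT A) phi /\
  continuous_on (inSFT B) psi /\
  (forall x, inSFT A x -> forall i, phi (shift x) i = shift (phi x) i).

(* the conjugacy phi (inverse psi) is elementary with local rules philoc, psiloc
   (only their values on allowed pairs matter) *)
Definition is_elementary (m n : nat) (A : 'M[bool]_m) (B : 'M[bool]_n)
  (phi : (int -> 'I_m) -> (int -> 'I_n)) (psi : (int -> 'I_n) -> (int -> 'I_m))
  (philoc : 'I_m -> 'I_m -> 'I_n) (psiloc : 'I_n -> 'I_n -> 'I_m) : Prop :=
  (forall x, inSFT A x -> forall i, phi x i = philoc (x i) (x (i + 1))) /\
  (forall y, inSFT B y -> forall i, psi y i = psiloc (y (i - 1)) (y i)).

Definition Rphi (m n : nat) (A : 'M[bool]_m) (philoc : 'I_m -> 'I_m -> 'I_n)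
  : 'M[bool]_(m, n) :=
  \matrix_(a < m, b < n) [exists a' : 'I_m, A a a' && (philoc a a' == b)].

(* An allowed pair of symbols of a non-degenerate shift of finite type extends
   to a whole point, by following successors forwards and predecessors
   backwards.  Hence (ii) and (iv) coincide by reading the local rule of phi at
   coordinate 0.  For (iii), a pair b' b allowed in B extends to a point y with
   y_0 = b; the point x := psi y satisfies phi x = y, and the local rule of psi
   at coordinate 0 gives x_0 = psiloc b' b; conversely x_0 = psi (phi x)_0 is
   read off the coordinates -1 and 0 of y = phi x. *)
From mathcomp Require Import all_boot all_order all_algebra.
From mathcomp Require Import zify.
Set Implicit Arguments. Unset Strict Implicit. Unset Printing Implicit Defensive.
Import GRing.Theory.
Local Open Scope ring_scope.

Section AllowedPairExtension.
Variables (m : nat) (A : 'M[bool]_m).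

Definition succ_sym (i : 'I_m) : 'I_m := odflt i [pick j | A i j].
Definition pred_sym (i : 'I_m) : 'I_m := odflt i [pick j | A j i].

Hypothesis ndA : nondegenerate01 A.

Lemma allowed_succ_sym (i : 'I_m) : A i (succ_sym i).
Proof.
rewrite /succ_sym; case: pickP => [j -> //| noj].
by have [j Aij] := ndA.1 i; move: (noj j); rewrite Aij.
Qed.

Lemma allowed_pred_sym (i : 'I_m) : A (pred_sym i) i.
Proof.
rewrite /pred_sym; case: pickP => [j -> //| noj].
by have [j Aji] := ndA.2 i; move: (noj j); rewrite Aji.
Qed.

Lemma allowed_pair_extends (c d : 'I_m) : A c d ->
  exists x : int -> 'I_m, [/\ inSFT A x, x 0 = c & x 1 = d].
Proof.
move=> Acd.
(* [Negz k] is the integer [-(k+1)] *)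
pose x (l : int) : 'I_m := match l with
  | Posz 0 => c
  | Posz k.+1 => iter k succ_sym d
  | Negz k => iter k.+1 pred_sym c
  end.
exists x; split => //; case=> [[|k]|[|k]].
- exact: Acd.
- have -> : Posz k.+1 + 1 = Posz k.+2 by lia.
  exact: allowed_succ_sym.
- have -> : Negz 0 + 1 = 0 by lia.
  exact: allowed_pred_sym.
- have -> : Negz k.+1 + 1 = Negz k by lia.
  exact: allowed_pred_sym.
Qed.

End AllowedPairExtension.

Lemma inSFT_shift (m : nat) (A : 'M[bool]_m) (x : int -> 'I_m) :
  inSFT A x -> inSFT A (shift x).
Proof. by move=> Ax l; exact: Ax. Qed.

Lemma RphiP (m n : nat) (A : 'M[bool]_m) (philoc : 'I_m -> 'I_m -> 'I_n)
    (a : 'I_m) (b : 'I_n) :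
  reflect (exists a' : 'I_m, A a a' /\ philoc a a' = b) (Rphi A philoc a b).
Proof.
rewrite /Rphi mxE; apply: (iffP existsP) => [[a' /andP[Aaa' /eqP]] | [a' [Aaa' <-]]].
- by exists a'.
- by exists a'; rewrite Aaa' eqxx.
Qed.

Section ElementaryConjugacy.
Variables (m n : nat) (A : 'M[bool]_m) (B : 'M[bool]_n).
Variables (phi : (int -> 'I_m) -> (int -> 'I_n)) (psi : (int -> 'I_n) -> (int -> 'I_m)).
Variables (philoc : 'I_m -> 'I_m -> 'I_n) (psiloc : 'I_n -> 'I_n -> 'I_m).

Hypothesis ndA : nondegenerate01 A.
Hypothesis ndB : nondegenerate01 B.
Hypothesis phi_SFT : forall x, inSFT A x -> inSFT B (phi x).
Hypothesis psi_SFT : forall y, inSFT B y -> inSFT A (psi y).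
Hypothesis psiK : forall x, inSFT A x -> forall i, psi (phi x) i = x i.
Hypothesis phiK : forall y, inSFT B y -> forall i, phi (psi y) i = y i.
Hypothesis phi_local : forall x, inSFT A x -> forall i, phi x i = philoc (x i) (x (i + 1)).
Hypothesis psi_local : forall y, inSFT B y -> forall i, psi y i = psiloc (y (i - 1)) (y i).

Definition graph_at (a : 'I_m) (b : 'I_n) : Prop :=
  exists (x : int -> 'I_m) (y : int -> 'I_n),
    [/\ inSFT A x, inSFT B y, x 0 = a, y 0 = b & forall i, y i = phi x i].

Lemma philoc_graph_at (a : 'I_m) (b : 'I_n) :
  (exists a' : 'I_m, A a a' /\ philoc a a' = b) <-> graph_at a b.
Proof.
split=> [[a' [Aaa' <-]] | [x [y [Ax _ <- <- ->]]]].
- have [x [Ax x0 x1]] := allowed_pair_extends ndA Aaa'.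
  exists x, (phi x).
  split; [exact: Ax | exact: phi_SFT | exact: x0 | | by []].
  by rewrite phi_local // add0r x0 x1.
- by exists (x 1); split; [exact: (Ax 0) | rewrite phi_local].
Qed.

Lemma psiloc_graph_at (a : 'I_m) (b : 'I_n) :
  (exists b' : 'I_n, B b' b /\ psiloc b' b = a) <-> graph_at a b.
Proof.
split=> [[b' [Bb'b <-]] | [x [y [Ax By <- <- ephi]]]].
- have [y [By y0 y1]] := allowed_pair_extends ndB Bb'b.
  have Bsy := inSFT_shift By.
  exists (psi (shift y)), (shift y).
  split; [exact: psi_SFT | exact: Bsy | | exact: y1 | by move=> i; rewrite phiK].
  by rewrite psi_local // /shift sub0r addNr y0 add0r y1.
- exists (y (-1)); split; first by have := By (-1); rewrite addNr.
  by rewrite -(psiK Ax 0) (psi_local (phi_SFT Ax)) !ephi.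
Qed.

End ElementaryConjugacy.

Theorem mainTheorem10 (m n : nat) (A : 'M[bool]_m) (B : 'M[bool]_n)
  (phi : (int -> 'I_m) -> (int -> 'I_n)) (psi : (int -> 'I_n) -> (int -> 'I_m))
  (philoc : 'I_m -> 'I_m -> 'I_n) (psiloc : 'I_n -> 'I_n -> 'I_m) :
  nondegenerate01 A -> nondegenerate01 B ->
  is_conjugacy A B phi psi ->
  is_elementary A B phi psi philoc psiloc ->
  forall (a : 'I_m) (b : 'I_n),
    (Rphi A philoc a b <-> exists a' : 'I_m, A a a' /\ philoc a a' = b) /\
    (Rphi A philoc a b <-> exists b' : 'I_n, B b' b /\ psiloc b' b = a) /\
    (Rphi A philoc a b <->
       exists (x : int -> 'I_m) (y : int -> 'I_n),
         [/\ inSFT A x, inSFT B y, x 0 = a, y 0 = b & forall i, y i = phi x i]).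
Proof.
move=> ndA ndB [phi_SFT [psi_SFT [psiK [phiK _]]]] [phi_local psi_local] a b.
have R_ii : Rphi A philoc a b <-> exists a', A a a' /\ philoc a a' = b.
  by split=> /RphiP.
have ii_iv := philoc_graph_at ndA phi_SFT phi_local a b.
have iii_iv := psiloc_graph_at ndB phi_SFT psi_SFT psiK phiK psi_local a b.
split; [exact: R_ii | split].
- by rewrite R_ii ii_iv iii_iv.
- by rewrite R_ii ii_iv.
Qed.
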